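(* For finite magmas, the laws $\mathrm{x}\simeq(\mathrm{x}\diamond(\mathrm{x}\diamond\mathrm{y}))\diamond\mathrm{y}$ and $\mathrm{x}\simeq(\mathrm{x}\diamond\mathrm{y})\diamond((\mathrm{x}\diamond\mathrm{y})\diamond\mathrm{y})$ are equivalent: a finite magma satisfies one if and only if it satisfies the other.
   Context: A magma is a set with a binary operation $\diamond$; it satisfies a law if the identity holds for all assignments of variables. *)

From mathcomp Require Import all_boot.
Set Implicit Arguments.
Unset Strict Implicit.
Unset Printing Implicit Defensive.

Definition law1 (M : Type) (op : M -> M -> M) : Prop :=
  forall x y : M, x = op (op x (op x y)) y.

Definition law2 (M : Type) (op : M -> M -> M) : Prop :=
  forall x y : M, x = op (op x y) (op (op x y) y).

From mathcomp Require Import all_boot.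

(* For fixed y, both laws relate the maps z |-> z y and z |-> z (z y):
   law1 says the first is a left inverse of the second, law2 that it is a
   right inverse.  On a finite carrier a one-sided inverse of a self-map is
   two-sided, so the laws coincide. *)

Section LawsAsCancellations.

Variables (M : Type) (op : M -> M -> M).

Lemma law1_cancel :
  law1 op <-> forall y, cancel (fun x => op x (op x y)) (op^~ y).
Proof. by split=> H y x; rewrite ?H -?H. Qed.

Lemma law2_cancel :
  law2 op <-> forall y, cancel (op^~ y) (fun x => op x (op x y)).
Proof. by split=> H y x; rewrite ?H -?H. Qed.

End LawsAsCancellations.

Theorem mainTheorem16 (M : finType) (op : M -> M -> M) :
  law1 op <-> law2 op.
Proof.
split=> [/law1_cancel H | /law2_cancel H].
- by apply/law2_cancel=> y; apply: canF_sym (H y).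
- by apply/law1_cancel=> y; apply: canF_sym (H y).
Qed.
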